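(* Let $n\ge4$. The flat twisted braid group $\mathcal{FT}_n$ has the following reduced presentation: it is isomorphic to the group $$G=\langle\, c_1, b_1, v_1,\dots,v_{n-1} \mid R\,\rangle$$ where $R$ consists of the relations $v_iv_{i+1}v_i=v_{i+1}v_iv_{i+1}$ ($1\le i\le n-2$), $v_iv_j=v_jv_i$ ($|i-j|\ge2$), $v_i^2=1$ ($1\le i\le n-1$), $c_1v_j=v_jc_1$ ($j>2$), $c_1^2=1$, $b_1^2=1$, $b_1v_j=v_jb_1$ ($j>1$), $(v_1c_1v_1)(v_2c_1v_2)(v_1c_1v_1)=(v_2c_1v_2)(v_1c_1v_1)(v_2c_1v_2)$, $c_1(v_2v_3v_1v_2c_1v_2v_1v_3v_2)=(v_2v_3v_1v_2c_1v_2v_1v_3v_2)c_1$, $b_1(v_1b_1v_1)=(v_1b_1v_1)b_1$, $c_1(v_2v_1b_1v_1v_2)=(v_2v_1b_1v_1v_2)c_1$, $(v_1b_1v_1)b_1c_1b_1(v_1b_1v_1)=v_1c_1v_1$. The isomorphism $G\to\mathcal{FT}_n$ sends $c_1,b_1,v_1,\dots,v_{n-1}$ to the elements of the same names, and its inverse sends $v_i\mapsto v_i$, $c_1\mapsto c_1$, $b_1\mapsto b_1$, $c_{i+1}\mapsto (v_i\cdots v_2v_1)(v_{i+1}\cdots v_3v_2)c_1(v_2v_3\cdots v_{i+1})(v_1v_2\cdots v_i)$ for $1\le i\le n-2$, and $b_{i+1}\mapsto(v_iv_{i-1}\cdots v_1)b_1(v_1v_2\cdots v_i)$ for $1\le i\le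 n-1$.
   Context: The flat twisted braid group $\mathcal{FT}_n$ (the group of flat twisted braids on $n$ strands: braids with flat crossings, i.e. crossings without over/under information, virtual crossings and bars on strands, under concatenation) is the group with generators $c_1,\dots,c_{n-1}$ (flat crossing of strands $i,i+1$), $v_1,\dots,v_{n-1}$ (virtual crossing) and $b_1,\dots,b_n$ (bar on strand $i$), subject to the relations: virtual relations $v_i^2=1$, $v_iv_j=v_jv_i$ ($|i-j|\ge2$), $v_iv_{i+1}v_i=v_{i+1}v_iv_{i+1}$; twisted relations $b_i^2=1$ ($1\le i\le n$), $b_ib_j=b_jb_i$ ($i\neq j$); mixed relations $b_iv_i=v_ib_{i+1}$ ($1\le i\le n-1$), $b_iv_j=v_jb_i$ ($j>i$ or $j<i-1$); flat relations $c_i^2=1$, $c_ic_{i+1}c_i=c_{i+1}c_ic_{i+1}$ ($1\le i\le n-2$), $c_ic_j=c_jc_i$ ($|i-j|\ge2$); mixed flat relations $c_iv_j=v_jc_i$ ($|i-j|\ge2$), $v_ic_{i+1}v_i=v_{i+1}c_iv_{i+1}$ ($1\le i\le n-2$), $b_ib_{i+1}c_ib_{i+1}b_i=v_ic_iv_i$ ($1\le i\le n-1$), $b_ic_j=c_jb_i$ ($j>i$ or $j<i-1$). *)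

From mathcomp Require Import all_boot.
Set Implicit Arguments. Unset Strict Implicit. Unset Printing Implicit Defensive.

(* A letter is a generator together with an exponent flag (true = inverse). *)

Definition letter (A : Type) := (A * bool)%type.
Definition word (A : Type) := seq (letter A).
Definition ltr (A : Type) (a : A) : letter A := (a, false).
Definition inv_word (A : Type) (w : word A) : word A :=
  rev (map (fun x : letter A => (x.1, ~~ x.2)) w).

Inductive pres_eq (A : Type) (R : word A -> word A -> Prop) : word A -> word A -> Prop :=
| pe_refl w : pres_eq R w w
| pe_sym u w : pres_eq R u w -> pres_eq R w u
| pe_trans u v w : pres_eq R u v -> pres_eq R v w -> pres_eq R u w
| pe_ctx p q u w : pres_eq R u w -> pres_eq R (p ++ u ++ q) (p ++ w ++ q)
| pe_free (x : letter A) : pres_eq R [:: x; (x.1, ~~ x.2)] [::]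
| pe_rel u w : R u w -> pres_eq R u w.

(* The monoid map on words induced by an assignment of a word to each generator
   (this is how a map on generators induces a homomorphism of free groups). *)
Definition subst (A B : Type) (f : A -> word B) (w : word A) : word B :=
  flatten (map (fun x : letter A => if x.2 then inv_word (f x.1) else f x.1) w).

(* Generators are indexed by nat (1-based, as in the paper); generators whose
   index is out of range (c_i, v_i with i not in [1,n-1], b_i with i not in
   [1,n]) are killed by a relation, which is a Tietze transformation and does
   not change the group. *)
Inductive FTgen := FTc of nat | FTv of nat | FTb of nat.

Definition fc i : letter FTgen := ltr (FTc i).
Definition fv i : letter FTgen := ltr (FTv i).
Definition fb i : letter FTgen := ltr (FTb i).

Definition far (i j : nat) : bool := (i.+2 <= j) || (j.+2 <= i).

Inductive FTrel (n : nat) : word FTgen -> word FTgen -> Prop :=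
| ft_kill_c i : ~~ (1 <= i <= n.-1) -> FTrel n [:: fc i] [::]
| ft_kill_v i : ~~ (1 <= i <= n.-1) -> FTrel n [:: fv i] [::]
| ft_kill_b i : ~~ (1 <= i <= n) -> FTrel n [:: fb i] [::]
| ft_vv i : 1 <= i <= n.-1 -> FTrel n [:: fv i; fv i] [::]
| ft_vcomm i j : 1 <= i <= n.-1 -> 1 <= j <= n.-1 -> far i j ->
    FTrel n [:: fv i; fv j] [:: fv j; fv i]
| ft_vbraid i : 1 <= i <= n.-2 ->
    FTrel n [:: fv i; fv i.+1; fv i] [:: fv i.+1; fv i; fv i.+1]
| ft_bb i : 1 <= i <= n -> FTrel n [:: fb i; fb i] [::]
| ft_bcomm i j : 1 <= i <= n -> 1 <= j <= n -> i != j ->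
    FTrel n [:: fb i; fb j] [:: fb j; fb i]
| ft_bv i : 1 <= i <= n.-1 -> FTrel n [:: fb i; fv i] [:: fv i; fb i.+1]
| ft_bvcomm i j : 1 <= i <= n -> 1 <= j <= n.-1 -> (i < j) || (j.+1 < i) ->
    FTrel n [:: fb i; fv j] [:: fv j; fb i]
| ft_cc i : 1 <= i <= n.-1 -> FTrel n [:: fc i; fc i] [::]
| ft_cbraid i : 1 <= i <= n.-2 ->
    FTrel n [:: fc i; fc i.+1; fc i] [:: fc i.+1; fc i; fc i.+1]
| ft_ccomm i j : 1 <= i <= n.-1 -> 1 <= j <= n.-1 -> far i j ->
    FTrel n [:: fc i; fc j] [:: fc j; fc i]
| ft_cvcomm i j : 1 <= i <= n.-1 -> 1 <= j <= n.-1 -> far i j ->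
    FTrel n [:: fc i; fv j] [:: fv j; fc i]
| ft_vcv i : 1 <= i <= n.-2 ->
    FTrel n [:: fv i; fc i.+1; fv i] [:: fv i.+1; fc i; fv i.+1]
| ft_bbcbb i : 1 <= i <= n.-1 ->
    FTrel n [:: fb i; fb i.+1; fc i; fb i.+1; fb i] [:: fv i; fc i; fv i]
| ft_bccomm i j : 1 <= i <= n -> 1 <= j <= n.-1 -> (i < j) || (j.+1 < i) ->
    FTrel n [:: fb i; fc j] [:: fc j; fb i].

Definition FT_eq (n : nat) := pres_eq (FTrel n).

Inductive Ggen := Gc | Gb | Gv of nat.

Definition gC : letter Ggen := ltr Gc.
Definition gB : letter Ggen := ltr Gb.
Definition gV i : letter Ggen := ltr (Gv i).

Definition gvcv i : word Ggen := [:: gV i; gC; gV i].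
Definition gX : word Ggen := [:: gV 2; gV 3; gV 1; gV 2; gC; gV 2; gV 1; gV 3; gV 2].
Definition gY : word Ggen := [:: gV 2; gV 1; gB; gV 1; gV 2].
Definition gvbv : word Ggen := [:: gV 1; gB; gV 1].

Inductive Grel (n : nat) : word Ggen -> word Ggen -> Prop :=
| g_kill_v i : ~~ (1 <= i <= n.-1) -> Grel n [:: gV i] [::]
| g_vbraid i : 1 <= i <= n.-2 ->
    Grel n [:: gV i; gV i.+1; gV i] [:: gV i.+1; gV i; gV i.+1]
| g_vcomm i j : 1 <= i <= n.-1 -> 1 <= j <= n.-1 -> far i j ->
    Grel n [:: gV i; gV j] [:: gV j; gV i]
| g_vv i : 1 <= i <= n.-1 -> Grel n [:: gV i; gV i] [::]
| g_cv j : 2 < j <= n.-1 -> Grel n [:: gC; gV j] [:: gV j; gC]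
| g_cc : Grel n [:: gC; gC] [::]
| g_bb : Grel n [:: gB; gB] [::]
| g_bv j : 1 < j <= n.-1 -> Grel n [:: gB; gV j] [:: gV j; gB]
| g_r1 : Grel n (gvcv 1 ++ gvcv 2 ++ gvcv 1) (gvcv 2 ++ gvcv 1 ++ gvcv 2)
| g_r2 : Grel n (gC :: gX) (gX ++ [:: gC])
| g_r3 : Grel n (gB :: gvbv) (gvbv ++ [:: gB])
| g_r4 : Grel n (gC :: gY) (gY ++ [:: gC])
| g_r5 : Grel n (gvbv ++ [:: gB; gC; gB] ++ gvbv) (gvcv 1).

Definition G_eq (n : nat) := pres_eq (Grel n).

Definition phi (g : Ggen) : word FTgen :=
  match g with
  | Gc => [:: fc 1]
  | Gb => [:: fb 1]
  | Gv i => [:: fv i]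
  end.

(* [gdown k m] = v_k v_(k-1) ... v_m ; [gup m k] = v_m v_(m+1) ... v_k *)
Definition gdown (k m : nat) : word Ggen := [seq gV j | j <- rev (iota m (k.+1 - m))].
Definition gup (m k : nat) : word Ggen := [seq gV j | j <- iota m (k.+1 - m)].

(* image of c_(i+1): (v_i..v_1)(v_(i+1)..v_2) c_1 (v_2..v_(i+1))(v_1..v_i) *)
Definition cimg (i : nat) : word Ggen :=
  gdown i 1 ++ gdown i.+1 2 ++ [:: gC] ++ gup 2 i.+1 ++ gup 1 i.
(* image of b_(i+1): (v_i..v_1) b_1 (v_1..v_i) *)
Definition bimg (i : nat) : word Ggen := gdown i 1 ++ [:: gB] ++ gup 1 i.

(* FT_n -> G (out-of-range generators, which are trivial in FT_n, go to 1) *)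
Definition psi (n : nat) (g : FTgen) : word Ggen :=
  match g with
  | FTv i => [:: gV i]
  | FTc i => if i == 1 then [:: gC]
             else if 2 <= i <= n.-1 then cimg i.-1 else [::]
  | FTb i => if i == 1 then [:: gB]
             else if 2 <= i <= n then bimg i.-1 else [::]
  end.

(* Both maps are given on generators, so each is a homomorphism as soon as it
   sends every defining relation to a consequence of the target relations, and
   they are mutually inverse as soon as both composites fix every generator.
   In G the images of c_i and b_i satisfy c_(i+1) = v_i v_(i+1) c_i v_(i+1) v_i
   and b_(i+1) = v_i b_i v_i, so conjugating by v's lowers indices: each relation
   of FT_n between these images reduces by induction to the case of smallest
   indices, which is one of the relations R (up to conjugation).  In FT_n,
   conversely, v_i c_(i+1) v_i = v_(i+1) c_i v_(i+1) and b_i v_i = v_i b_(i+1)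
   turn every relation of R into relations of FT_n and send the images of c_i
   and b_i back to c_i and b_i. *)

From mathcomp Require Import all_boot zify.
From Stdlib Require Import Setoid Morphisms.

#[local] Hint Resolve pe_refl : core.
(* Side conditions on generator indices are linear arithmetic, so [//] closes them. *)
#[local] Hint Extern 0 (is_true _) => rewrite ?/far; lia : core.

Section Presentation.
Context {A : Type} {R : word A -> word A -> Prop}.
Local Notation "u ~ w" := (pres_eq R u w) (at level 70).

Global Instance pres_eq_equiv : Equivalence (pres_eq R).
Proof. by split; [exact: pe_refl | exact: pe_sym | exact: pe_trans]. Qed.

Lemma pres_eq_catl p {u w} : u ~ w -> p ++ u ~ p ++ w.
Proof. by move=> uw; have := pe_ctx p [::] uw; rewrite !cats0. Qed.

Lemma pres_eq_catr q {u w} : u ~ w -> u ++ q ~ w ++ q.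
Proof. exact: (pe_ctx [::] q). Qed.

Global Instance cat_pres_eq : Proper (pres_eq R ==> pres_eq R ==> pres_eq R) (@cat (letter A)).
Proof.
move=> u u' uu' w w' ww'.
by transitivity (u' ++ w); [exact: pres_eq_catr | exact: pres_eq_catl].
Qed.

Global Instance cons_pres_eq : Proper (eq ==> pres_eq R ==> pres_eq R) (@cons (letter A)).
Proof. by move=> x _ <- u w; apply: (pres_eq_catl [:: x]). Qed.

Lemma pres_eq_rel_cat u w r : R u w -> u ++ r ~ w ++ r.
Proof. by move=> uw; apply/pres_eq_catr/pe_rel. Qed.

Lemma inv_word_cat (u w : word A) : inv_word (u ++ w) = inv_word w ++ inv_word u.
Proof. by rewrite /inv_word map_cat rev_cat. Qed.

Lemma inv_word_cons x (w : word A) : inv_word (x :: w) = inv_word w ++ [:: (x.1, ~~ x.2)].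
Proof. by rewrite /inv_word /= rev_cons cats1. Qed.

Lemma inv_wordK : involutive (@inv_word A).
Proof.
move=> w; rewrite /inv_word map_rev revK -map_comp -[RHS]map_id.
by apply: eq_map => -[a b] /=; rewrite negbK.
Qed.

Lemma catwV (w : word A) : w ++ inv_word w ~ [::].
Proof.
elim: w => [|x w IHw] //=.
rewrite inv_word_cons catA IHw.
exact: pe_free.
Qed.

Lemma catVw (w : word A) : inv_word w ++ w ~ [::].
Proof. by have := catwV (inv_word w); rewrite inv_wordK. Qed.

Lemma pres_eq_inv {u w} : u ~ w -> inv_word u ~ inv_word w.
Proof.
move=> uw; rewrite -[inv_word u]cats0 -(catwV w) catA.
by rewrite -(pres_eq_catr _ (pres_eq_catl _ uw)) catVw.
Qed.

End Presentation.

Section Substitution.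
Context {A B : Type} (f : A -> word B).

Lemma subst_ltr a w : subst f (ltr a :: w) = f a ++ subst f w.
Proof. by []. Qed.

Lemma subst_cat u w : subst f (u ++ w) = subst f u ++ subst f w.
Proof. by rewrite /subst map_cat flatten_cat. Qed.

Lemma subst_inv w : subst f (inv_word w) = inv_word (subst f w).
Proof.
elim: w => [|[a b] w IHw] //=.
rewrite -[_ :: w]cat1s inv_word_cat !subst_cat IHw inv_word_cat; congr (_ ++ _).
by rewrite /subst /= !cats0; case: b; rewrite ?inv_wordK.
Qed.

Lemma subst_pres_eq {RA : word A -> word A -> Prop} {RB : word B -> word B -> Prop} :
  (forall u w, RA u w -> pres_eq RB (subst f u) (subst f w)) ->
  forall u w, pres_eq RA u w -> pres_eq RB (subst f u) (subst f w).
Proof.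
move=> f_rel u w; elim=> {u w} [//|u w _ uw|u v w _ uv _ vw|p q u w _ uw|[a b]|u w /f_rel //].
- by symmetry.
- by rewrite uv.
- by rewrite !subst_cat uw.
- by rewrite /subst /= !cats0; case: b; [exact: catVw | exact: catwV].
Qed.

End Substitution.

Lemma subst_cancel {A B : Type} (f : A -> word B) (g : B -> word A)
    {RA : word A -> word A -> Prop} :
  (forall a, pres_eq RA (subst g (f a)) [:: ltr a]) ->
  forall u, pres_eq RA (subst g (subst f u)) u.
Proof.
move=> gfK; elim=> [|[a b] u IHu] //=.
rewrite -[_ :: u]cat1s !subst_cat IHu; apply: pres_eq_catr.
rewrite /subst /= cats0; case: b; last exact: gfK.
by rewrite -/(subst g _) subst_inv (pres_eq_inv (gfK a)).
Qed.

Definition cword i := cimg i.-1.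
Definition bword i := bimg i.-1.
Arguments cword : simpl never.
Arguments bword : simpl never.

Lemma gdownS k m : m <= k.+1 -> gdown k.+1 m = gV k.+1 :: gdown k m.
Proof. by move=> mk; rewrite /gdown subSn // -addn1 iotaD rev_cat subnKC. Qed.

Lemma gupS m k : m <= k.+1 -> gup m k.+1 = rcons (gup m k) (gV k.+1).
Proof. by move=> mk; rewrite /gup subSn // -addn1 iotaD map_cat subnKC // cats1. Qed.

Lemma cword1 : cword 1 = [:: gC]. Proof. by []. Qed.
Lemma bword1 : bword 1 = [:: gB]. Proof. by []. Qed.

Lemma bwordS i r : 1 <= i -> bword i.+1 ++ r = gV i :: bword i ++ gV i :: r.
Proof.
by case: i => // i _; rewrite /bword /bimg /= gdownS // gupS // -cats1 /= -!catA /= -!catA.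
Qed.

Lemma cword_expand i : 1 <= i ->
  cword i = gdown i.-1 1 ++ gdown i 2 ++ gC :: gup 2 i ++ gup 1 i.-1.
Proof. by case: i. Qed.

Lemma cwordS_expand i : 1 <= i -> cword i.+1 =
  gV i :: gdown i.-1 1 ++ gV i.+1 :: gdown i 2 ++ gC :: gup 2 i ++ gV i.+1 :: gup 1 i.-1 ++ [:: gV i].
Proof.
case: i => // i _; rewrite /cword /cimg (@gdownS i 1) // (@gdownS i.+1 2) //.
by rewrite (@gupS 2 i.+1) // (@gupS 1 i) // -!cats1 -!catA.
Qed.

Section GRelations.
Variable n : nat.
Local Notation "u ~ w" := (pres_eq (Grel n) u w) (at level 70).

Lemma G_vv k r : 1 <= k <= n.-1 -> gV k :: gV k :: r ~ r.
Proof. by move=> ?; apply: (pres_eq_rel_cat [:: gV k; gV k] [::] r); constructor. Qed.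

Lemma G_vcomm i j r : 1 <= i <= n.-1 -> 1 <= j <= n.-1 -> far i j ->
  gV i :: gV j :: r ~ gV j :: gV i :: r.
Proof. by move=> *; apply: (pres_eq_rel_cat [:: gV i; gV j] [:: gV j; gV i] r); constructor. Qed.

Lemma G_vbraid i r : 1 <= i <= n.-2 ->
  gV i :: gV i.+1 :: gV i :: r ~ gV i.+1 :: gV i :: gV i.+1 :: r.
Proof.
by move=> ?; apply: (pres_eq_rel_cat [:: gV i; gV i.+1; gV i] [:: gV i.+1; gV i; gV i.+1] r); constructor.
Qed.

Lemma G_cv j r : 2 < j <= n.-1 -> gC :: gV j :: r ~ gV j :: gC :: r.
Proof. by move=> ?; apply: (pres_eq_rel_cat [:: gC; gV j] [:: gV j; gC] r); constructor. Qed.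

Lemma G_bv j r : 1 < j <= n.-1 -> gB :: gV j :: r ~ gV j :: gB :: r.
Proof. by move=> ?; apply: (pres_eq_rel_cat [:: gB; gV j] [:: gV j; gB] r); constructor. Qed.

Lemma G_cc r : gC :: gC :: r ~ r.
Proof. by apply: (pres_eq_rel_cat [:: gC; gC] [::] r); constructor. Qed.

Lemma G_bb r : gB :: gB :: r ~ r.
Proof. by apply: (pres_eq_rel_cat [:: gB; gB] [::] r); constructor. Qed.

Lemma G_vseq_comm s k r : {in s, forall j, (1 <= j <= n.-1) && far j k} -> 1 <= k <= n.-1 ->
  map gV s ++ gV k :: r ~ gV k :: map gV s ++ r.
Proof.
move=> sk k_range; elim: s sk => [|j s IHs] sk //=.
have /andP [j_range jk] := sk j (mem_head _ _).
have /IHs -> : {in s, forall l, (1 <= l <= n.-1) && far l k}.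
  by move=> l ls; apply: sk; rewrite in_cons ls orbT.
by rewrite G_vcomm.
Qed.

Lemma cwordS i r : 1 <= i -> i.+1 <= n.-1 ->
  cword i.+1 ++ r ~ gV i :: gV i.+1 :: cword i ++ gV i.+1 :: gV i :: r.
Proof.
move=> i_ge1 i_lt; rewrite cwordS_expand // cword_expand // /gdown /gup.
set lo := iota 1 _; have lo_far : {in lo, forall j, (1 <= j <= n.-1) && far j i.+1}.
  by move=> j; rewrite mem_iota.
have rlo_far : {in rev lo, forall j, (1 <= j <= n.-1) && far j i.+1}.
  by move=> j; rewrite mem_rev; apply: lo_far.
repeat rewrite -catA /=.
by rewrite (G_vseq_comm (rev lo) i.+1) // (G_vseq_comm lo i.+1).
Qed.

Lemma v_cword_comm_hi i k r : 1 <= i -> i.+2 <= k <= n.-1 ->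
  gV k :: cword i ++ r ~ cword i ++ gV k :: r.
Proof.
elim: i r => [|i IHi] r // i_ge1 k_range.
have [->|i_gt0] := posnP i; first by rewrite cword1 /= G_cv.
rewrite !(cwordS i) // (G_vcomm k i) // (G_vcomm k i.+1) // IHi //.
by rewrite (G_vcomm k i.+1) // (G_vcomm k i).
Qed.

Lemma v_shift_up k r : 1 <= k -> k.+2 <= n.-1 ->
  [:: gV k, gV k.+1, gV k.+2, gV k, gV k.+1 & r] ~
  [:: gV k.+1, gV k.+2, gV k, gV k.+1, gV k.+2 & r].
Proof.
move=> *; rewrite (G_vcomm k.+2 k) // (G_vbraid k) // (G_vbraid k.+1) //.
by rewrite (G_vcomm k k.+2).
Qed.

Lemma v_shift_down k r : 1 <= k -> k.+2 <= n.-1 ->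
  [:: gV k.+2, gV k.+1, gV k, gV k.+2, gV k.+1 & r] ~
  [:: gV k.+1, gV k, gV k.+2, gV k.+1, gV k & r].
Proof.
move=> *; rewrite (G_vcomm k k.+2) // -(G_vbraid k.+1) // -(G_vbraid k) //.
by rewrite (G_vcomm k.+2 k).
Qed.

Lemma v_cword_comm_lo k i r : 1 <= k -> k.+2 <= i <= n.-1 ->
  gV k :: cword i ++ r ~ cword i ++ gV k :: r.
Proof.
elim: i r => [|i IHi] r // k_ge1 i_range.
case: (ltngtP i k.+1) => [|k_lt_i|i_eq]; first by lia.
  rewrite !(cwordS i) // (G_vcomm k i) // (G_vcomm k i.+1) // IHi //.
  by rewrite (G_vcomm k i.+1) // (G_vcomm k i).
subst i; rewrite !(cwordS k.+1) // !(cwordS k) // (v_shift_up k) // (v_cword_comm_hi k k.+2) //.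
by rewrite (v_shift_down k).
Qed.

Lemma cword_sq i r : 1 <= i <= n.-1 -> cword i ++ cword i ++ r ~ r.
Proof.
elim: i r => [|i IHi] r // i_range.
have [->|i_gt0] := posnP i; first by rewrite cword1 /= G_cc.
rewrite !(cwordS i) //= (G_vv i) // (G_vv i.+1) // IHi //.
by rewrite (G_vv i.+1) // (G_vv i).
Qed.

Lemma bword_sq i r : 1 <= i <= n -> bword i ++ bword i ++ r ~ r.
Proof.
elim: i r => [|i IHi] r // i_range.
have [->|i_gt0] := posnP i; first by rewrite bword1 /= G_bb.
by rewrite !(bwordS i) //= (G_vv i) // IHi // (G_vv i).
Qed.

Lemma v_bword_comm_hi a k r : 1 <= a < k -> k <= n.-1 ->
  gV k :: bword a ++ r ~ bword a ++ gV k :: r.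
Proof.
elim: a r => [|a IHa] r // a_range k_le.
have [->|a_gt0] := posnP a; first by rewrite bword1 /= G_bv.
by rewrite !(bwordS a) //= (G_vcomm k a) // IHa // (G_vcomm k a).
Qed.

Lemma v_bword_comm_lo k a r : 1 <= k -> k.+2 <= a <= n ->
  gV k :: bword a ++ r ~ bword a ++ gV k :: r.
Proof.
elim: a r => [|a IHa] r // k_ge1 a_range.
case: (ltngtP a k.+1) => [|k_lt_a|a_eq]; first by lia.
  by rewrite !(bwordS a) //= (G_vcomm k a) // IHa // (G_vcomm k a).
subst a; rewrite !(bwordS k.+1) //= !(bwordS k) //= (G_vbraid k) //.
by rewrite (v_bword_comm_hi k k.+1) // (G_vbraid k).
Qed.

Lemma bword_comm i j r : 1 <= i < j -> j <= n ->
  bword i ++ bword j ++ r ~ bword j ++ bword i ++ r.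
Proof.
elim: i j r => [|i IHi] j r // i_range j_le.
have adjacent r' : i.+2 <= n -> bword i.+1 ++ bword i.+2 ++ r' ~ bword i.+2 ++ bword i.+1 ++ r'.
  move=> i_lt; have [->|i_gt0] := posnP i.
    exact: (pres_eq_rel_cat (gB :: gvbv) (gvbv ++ [:: gB]) r' (g_r3 n)).
  rewrite !(bwordS i) //= (v_bword_comm_lo i i.+2) // IHi //.
  by rewrite -(v_bword_comm_lo i i.+2).
elim: j r i_range j_le => [|j IHj] r // i_range j_le.
case: (ltngtP j i.+1) => [|i_lt_j|->]; [by lia| |exact: adjacent].
rewrite !(bwordS j) //= -(v_bword_comm_hi i.+1 j) // IHj //.
by rewrite (v_bword_comm_hi i.+1 j).
Qed.

Lemma c_cword_comm j r : 3 <= j <= n.-1 -> gC :: cword j ++ r ~ cword j ++ gC :: r.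
Proof.
elim: j r => [|j IHj] r // j_range.
case: (ltngtP j 2) => [|j_gt2|->]; first by lia.
  rewrite !(cwordS j) //= (G_cv j) // (G_cv j.+1) // IHj //.
  by rewrite (G_cv j.+1) // (G_cv j).
have cword3_gX r' : cword 3 ++ r' ~ gX ++ r'.
  by rewrite /cword /= (G_vcomm 1 3) // (G_vcomm 1 3 (gV 2 :: r')).
by rewrite !cword3_gX; apply: (pres_eq_rel_cat (gC :: gX) (gX ++ [:: gC]) r (g_r2 n)).
Qed.

Lemma cword_comm i j r : 1 <= i -> i.+2 <= j <= n.-1 ->
  cword i ++ cword j ++ r ~ cword j ++ cword i ++ r.
Proof.
elim: i j r => [|i IHi] j r // i_ge1 j_range.
have [->|i_gt0] := posnP i; first by rewrite cword1 /= c_cword_comm.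
rewrite !(cwordS i) //= (v_cword_comm_lo i j) // (v_cword_comm_lo i.+1 j) // IHi //.
by rewrite (v_cword_comm_lo i.+1 j) // (v_cword_comm_lo i j).
Qed.

Lemma cword_braid i r : 1 <= i <= n.-2 ->
  cword i ++ cword i.+1 ++ cword i ++ r ~ cword i.+1 ++ cword i ++ cword i.+1 ++ r.
Proof.
elim: i r => [|i IHi] r // i_range.
have [->|i_gt0] := posnP i.
  rewrite /cword /=; transitivity (gV 1 :: (gvcv 1 ++ gvcv 2 ++ gvcv 1) ++ gV 1 :: r).
    by rewrite /= (G_vv 1 r) // (G_vv 1).
  by rewrite (pres_eq_rel_cat _ _ (gV 1 :: r) (g_r1 n)).
(* Conjugation by v_i v_(i+1) v_(i+2) maps c_(i+1), c_(i+2) to c_i, c_(i+1). *)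
set w := [:: gV i; gV i.+1; gV i.+2].
have pull_lo r' : cword i.+1 ++ w ++ r' ~ w ++ cword i ++ r'.
  by rewrite (cwordS i) //= (G_vv i) // (G_vv i.+1) // -(v_cword_comm_hi i i.+2).
have pull_hi r' : cword i.+2 ++ w ++ r' ~ w ++ cword i.+1 ++ r'.
  rewrite -(v_cword_comm_lo i i.+2) // (cwordS i.+1) //=.
  by rewrite (G_vv i.+1) // (G_vv i.+2).
have insert_w X Y Z : X ++ Y ++ Z ++ r ~ X ++ Y ++ Z ++ w ++ rev w ++ r.
  by rewrite /= (G_vv i.+2) // (G_vv i.+1) // (G_vv i).
rewrite (insert_w (cword i.+1)) (insert_w (cword i.+2)).
by rewrite pull_lo pull_hi pull_lo pull_hi pull_lo pull_hi IHi.
Qed.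

Lemma bbcbb_cword i r : 1 <= i <= n.-1 ->
  bword i ++ bword i.+1 ++ cword i ++ bword i.+1 ++ bword i ++ r ~ gV i :: cword i ++ gV i :: r.
Proof.
elim: i r => [|i IHi] r // i_range.
have [->|i_gt0] := posnP i.
  rewrite (bword_comm 1 2 (cword 1 ++ _)) // -(bword_comm 1 2 r) //.
  exact: (pres_eq_rel_cat (gvbv ++ [:: gB; gC; gB] ++ gvbv) (gvcv 1) r (g_r5 n)).
(* Conjugation by v_i v_(i+1) lowers the index of each of b_(i+1), b_(i+2), c_(i+1). *)
have pull_c r' : cword i.+1 ++ gV i :: gV i.+1 :: r' ~ gV i :: gV i.+1 :: cword i ++ r'.
  by rewrite (cwordS i) //= (G_vv i) // (G_vv i.+1).
have pull_b r' : bword i.+1 ++ gV i :: gV i.+1 :: r' ~ gV i :: gV i.+1 :: bword i ++ r'.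
  by rewrite (bwordS i) //= (G_vv i) // -(v_bword_comm_hi i i.+1).
have pull_b' r' : bword i.+2 ++ gV i :: gV i.+1 :: r' ~ gV i :: gV i.+1 :: bword i.+1 ++ r'.
  by rewrite -(v_bword_comm_lo i i.+2) // (bwordS i.+1) //= (G_vv i.+1).
have insert_vv : r ~ [:: gV i, gV i.+1, gV i.+1, gV i & r].
  by rewrite (G_vv i.+1) // (G_vv i).
rewrite insert_vv pull_b pull_b' pull_c pull_b' pull_b -(G_vbraid i) // pull_c.
by rewrite -(G_vbraid i) // IHi.
Qed.

Lemma b_cword_comm j r : 2 <= j <= n.-1 -> gB :: cword j ++ r ~ cword j ++ gB :: r.
Proof.
elim: j r => [|j IHj] r // j_range.
case: (ltngtP j 1) => [|j_gt1|->]; first by lia.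
  rewrite !(cwordS j) //= (G_bv j) // (G_bv j.+1) // IHj //.
  by rewrite (G_bv j.+1) // (G_bv j).
rewrite /cword /=; transitivity (gV 1 :: gV 2 :: (gY ++ [:: gC]) ++ gV 2 :: gV 1 :: r).
  by rewrite /= (G_vv 2 (gV 1 :: gB :: _)) // (G_vv 1 (gB :: _)).
rewrite -(pres_eq_rel_cat _ _ (gV 2 :: gV 1 :: r) (g_r4 n)) /=.
by rewrite (G_vv 2 (gV 1 :: r)) // (G_vv 1 r).
Qed.

Lemma bword_cword_comm_lo i j r : 1 <= i < j -> j <= n.-1 ->
  bword i ++ cword j ++ r ~ cword j ++ bword i ++ r.
Proof.
elim: i j r => [|i IHi] j r // i_range j_le.
have [->|i_gt0] := posnP i; first by rewrite bword1 /= b_cword_comm.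
rewrite !(bwordS i) //= (v_cword_comm_lo i j) // IHi //.
by rewrite (v_cword_comm_lo i j).
Qed.

Lemma bword_c_comm i r : 3 <= i <= n -> bword i ++ gC :: r ~ gC :: bword i ++ r.
Proof.
elim: i r => [|i IHi] r // i_range.
case: (ltngtP i 2) => [|i_gt2|->]; first by lia.
  by rewrite !(bwordS i) //= (G_cv i) // -IHi // -(G_cv i).
symmetry; exact: (pres_eq_rel_cat (gC :: gY) (gY ++ [:: gC]) r (g_r4 n)).
Qed.

Lemma bword_cword_comm_hi i j r : 1 <= j -> j.+2 <= i <= n ->
  bword i ++ cword j ++ r ~ cword j ++ bword i ++ r.
Proof.
elim: j i r => [|j IHj] i r // j_ge1 i_range.
have [->|j_gt0] := posnP j; first by rewrite cword1 /= bword_c_comm.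
rewrite !(cwordS j) // -(v_bword_comm_lo j i) // -(v_bword_comm_lo j.+1 i) // IHj //.
by rewrite -(v_bword_comm_lo j.+1 i) // -(v_bword_comm_lo j i).
Qed.

Lemma v_cword_conj i r : 1 <= i <= n.-2 ->
  gV i :: cword i.+1 ++ gV i :: r ~ gV i.+1 :: cword i ++ gV i.+1 :: r.
Proof. by move=> i_range; rewrite (cwordS i) // (G_vv i) // (G_vv i r). Qed.

Lemma bword_v_shift i r : 1 <= i <= n.-1 -> bword i ++ gV i :: r ~ gV i :: bword i.+1 ++ r.
Proof. by move=> i_range; rewrite (bwordS i) //= (G_vv i). Qed.

End GRelations.

Section Psi.
Variables (n : nat) (n_gt1 : 1 < n).

Lemma psi_c i : 1 <= i <= n.-1 -> psi n (FTc i) = cword i.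
Proof. by move=> i_range /=; case: eqP => [-> // | i_ne1]; rewrite ifT. Qed.

Lemma psi_c_out i : ~~ (1 <= i <= n.-1) -> psi n (FTc i) = [::].
Proof. by move=> i_out; rewrite /= !ifF //; apply/negbTE; lia. Qed.

Lemma psi_b i : 1 <= i <= n -> psi n (FTb i) = bword i.
Proof. by move=> i_range /=; case: eqP => [-> // | i_ne1]; rewrite ifT. Qed.

Lemma psi_b_out i : ~~ (1 <= i <= n) -> psi n (FTb i) = [::].
Proof. by move=> i_out; rewrite /= !ifF //; apply/negbTE; lia. Qed.

Lemma psi_rel u w : FTrel n u w -> G_eq n (subst (psi n) u) (subst (psi n) w).
Proof.
case=> [i i_out|i i_out|i i_out|i ? |i j ? ? ?|i ?|i ?|i j ? ? ij|i ?|i j ? ? ij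
       |i ?|i ?|i j ? ? ij|i j ? ? ij|i ?|i ?|i j ? ? ij]; rewrite !subst_ltr.
- by rewrite psi_c_out.
- by apply: pe_rel; constructor.
- by rewrite psi_b_out.
- by apply: pe_rel; constructor.
- by apply: pe_rel; constructor.
- by apply: pe_rel; constructor.
- by rewrite psi_b // bword_sq.
- by rewrite !psi_b //; case: (ltngtP i j) ij => // [i_lt_j|j_lt_i] _;
    [|symmetry]; apply: bword_comm.
- by rewrite !psi_b //= bword_v_shift.
- by rewrite psi_b //=; symmetry; case/orP: ij => ij; [apply: v_bword_comm_hi|apply: v_bword_comm_lo].
- by rewrite psi_c // cword_sq.
- by rewrite !psi_c // cword_braid.
- by rewrite !psi_c //; case/orP: ij => ij; [|symmetry]; apply: cword_comm.
- by rewrite psi_c //=; symmetry; case/orP: ij => ij; [apply: v_cword_comm_hi|apply: v_cword_comm_lo].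
- by rewrite !psi_c //= v_cword_conj.
- by rewrite !psi_c // !psi_b //= bbcbb_cword.
- by rewrite psi_c // psi_b //; case/orP: ij => ij; [apply: bword_cword_comm_lo|apply: bword_cword_comm_hi].
Qed.

End Psi.

Section FTRelations.
Variables (n : nat) (n_ge4 : 4 <= n).
Local Notation "u ~ w" := (pres_eq (FTrel n) u w) (at level 70).

Lemma FT_vv i r : 1 <= i <= n.-1 -> fv i :: fv i :: r ~ r.
Proof. by move=> ?; apply: (pres_eq_rel_cat [:: fv i; fv i] [::] r); constructor. Qed.

Lemma FT_vcv i r : 1 <= i <= n.-2 ->
  fv i :: fc i.+1 :: fv i :: r ~ fv i.+1 :: fc i :: fv i.+1 :: r.
Proof.
by move=> ?; apply: (pres_eq_rel_cat [:: fv i; fc i.+1; fv i] [:: fv i.+1; fc i; fv i.+1] r); constructor.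
Qed.

Lemma FT_bv i r : 1 <= i <= n.-1 -> fb i :: fv i :: r ~ fv i :: fb i.+1 :: r.
Proof. by move=> ?; apply: (pres_eq_rel_cat [:: fb i; fv i] [:: fv i; fb i.+1] r); constructor. Qed.

Lemma FT_bcomm i j r : 1 <= i <= n -> 1 <= j <= n -> i != j ->
  fb i :: fb j :: r ~ fb j :: fb i :: r.
Proof. by move=> *; apply: (pres_eq_rel_cat [:: fb i; fb j] [:: fb j; fb i] r); constructor. Qed.

Lemma FT_cbraid i r : 1 <= i <= n.-2 ->
  fc i :: fc i.+1 :: fc i :: r ~ fc i.+1 :: fc i :: fc i.+1 :: r.
Proof.
by move=> ?; apply: (pres_eq_rel_cat [:: fc i; fc i.+1; fc i] [:: fc i.+1; fc i; fc i.+1] r); constructor.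
Qed.

Lemma FT_vcv_c i r : 1 <= i <= n.-2 ->
  fv i :: fv i.+1 :: fc i :: fv i.+1 :: fv i :: r ~ fc i.+1 :: r.
Proof. by move=> ?; rewrite -(FT_vcv i) // !FT_vv. Qed.

Lemma FT_vbv_b i r : 1 <= i <= n.-1 -> fv i :: fb i :: fv i :: r ~ fb i.+1 :: r.
Proof. by move=> ?; rewrite (FT_bv i) // FT_vv. Qed.

Lemma phi_rel u w : Grel n u w -> subst phi u ~ subst phi w.
Proof.
case=> [i|i|i j|i|j| | |j| | | | |] *; rewrite /subst /=; try by apply: pe_rel; constructor.
- by rewrite -!(FT_vcv 1) // !(FT_vv 1) // FT_cbraid.
- rewrite !(FT_vcv_c 1) // !(FT_vcv_c 2) //.
  by apply: (pres_eq_rel_cat [:: fc 1; fc 3] [:: fc 3; fc 1] [::]); constructor.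
- rewrite !(FT_vbv_b 1) //.
  by apply: (pres_eq_rel_cat [:: fb 1; fb 2] [:: fb 2; fb 1] [::]); constructor.
- rewrite !(FT_vbv_b 1) // !(FT_vbv_b 2) //.
  by symmetry; apply: (pres_eq_rel_cat [:: fb 3; fc 1] [:: fc 1; fb 3] [::]); constructor.
- rewrite !(FT_vbv_b 1) // (FT_bcomm 2 1) // (FT_bcomm 1 2 [::]) //.
  by apply: (pres_eq_rel_cat [:: fb 1; fb 2; fc 1; fb 2; fb 1] [:: fv 1; fc 1; fv 1] [::]); constructor.
Qed.

Lemma phi_hom {u w} : G_eq n u w -> subst phi u ~ subst phi w.
Proof. exact: (subst_pres_eq phi phi_rel). Qed.

Lemma phi_cword i : 1 <= i <= n.-1 -> subst phi (cword i) ~ [:: fc i].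
Proof.
elim: i => [|i IHi] // i_range; have [->|i_gt0] := posnP i; first by [].
have := phi_hom (cwordS n i [::] i_gt0 _); rewrite cats0 => -> //.
by rewrite !subst_ltr subst_cat IHi // /subst /= FT_vcv_c.
Qed.

Lemma phi_bword i : 1 <= i <= n -> subst phi (bword i) ~ [:: fb i].
Proof.
elim: i => [|i IHi] // i_range; have [->|i_gt0] := posnP i; first by [].
rewrite -[bword _]cats0 bwordS // subst_ltr subst_cat IHi //.
by rewrite /subst /= FT_vbv_b.
Qed.

End FTRelations.

Lemma phi_psi_letter n a : 4 <= n -> FT_eq n (subst phi (psi n a)) [:: ltr a].
Proof.
move=> n_ge4; case: a => i //.
- have [i_range|i_out] := boolP (1 <= i <= n.-1); first by rewrite psi_c // phi_cword.
  by rewrite psi_c_out //; symmetry; apply: pe_rel; constructor.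
- have [i_range|i_out] := boolP (1 <= i <= n); first by rewrite psi_b // phi_bword.
  by rewrite psi_b_out //; symmetry; apply: pe_rel; constructor.
Qed.

Theorem theorem11 (n : nat) : 4 <= n ->
  (forall u w : word Ggen, G_eq n u w -> FT_eq n (subst phi u) (subst phi w)) /\
  (forall u w : word FTgen, FT_eq n u w -> G_eq n (subst (psi n) u) (subst (psi n) w)) /\
  (forall u : word Ggen, G_eq n (subst (psi n) (subst phi u)) u) /\
  (forall u : word FTgen, FT_eq n (subst phi (subst (psi n) u)) u).
Proof.
move=> n_ge4; split; first exact: phi_hom.
split; first by apply: subst_pres_eq; apply: psi_rel.
split; apply: subst_cancel => a; first by case: a.
exact: phi_psi_letter.
Qed.
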